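(* Let $\phi$ be an instance of \textsc{Max (2,3)-SAT} with $n$ variables and let $T_\phi$ be the tournament instance constructed from $\phi$ as described in the context. If $T_\phi$ has a seeding whose tournament value is at least $k'$, then $\phi$ admits an assignment that satisfies at least $k'-n$ clauses.
   Context: Tournament model: players form a finite set of size $2^{n'}$ totally ordered by strength (stronger beats weaker). A seeding is a bijection $\sigma$ from players to $[2^{n'}]$. In round $r=1,\dots,n'$, for each block of seed positions $\{(k-1)2^r+1,\dots,k2^r\}$, the winner $a$ of its first half $\{(k-1)2^r+1,\dots,(k-1)2^r+2^{r-1}\}$ plays the winner $b$ of its second half (a single-position block is won by the player seeded there), the stronger one wins the block, and the game has value $v(a,b,r)$. The tournament value is the sum of values of all games played. \textsc{Max (2,3)-SAT} instance: a CNF formula $\phi$ with variables $x_1,\dots,x_n$ and clauses $c_1,\dots,c_m$, each clause having exactly two literals and each variable appearing in at most three clauses; the occurrences of each variable $x$ as a literal are numbered $1,2,3$ (its $j$th appearance) in a fixed order. Construction of $T_\phi$: let $n'$ be the smallest integer with $16n\le 2^{n'}$ and $p=2^{n'}-16n$. Players: for each variable $x$, three variable players $x,x^T,x^F$; for each clause $c$, one clause player $c$; and dummy players $f_1,\dots,f_{13n+p-m}$. Strength order (strongest first): $x_1>x_1^T>x_1^F>x_2>x_2^T>x_2^F>\dots>x_n>x_n^T>x_n^F>c_1>\dots>c_m>f_1>\dots>f_{13n+p-m}$. Game values: for each variable $x$, $v(x,x^T,1)=v(x^T,x,1)=v(x,x^F,1)=v(x^F,x,1)=1$; for each clause $c$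 and each literal of $c$ that is the $j$th appearance of variable $x$, if $x$ appears non-negated there set $v(c,x^T,j)=v(x^T,c,j)=1$, and otherwise set $v(c,x^F,j)=v(x^F,c,j)=1$; all other values $v(a,b,r)$ for $r\in[n']$ are $0$. *)

From mathcomp Require Import all_boot all_fingroup.
Set Implicit Arguments. Unset Strict Implicit. Unset Printing Implicit Defensive.

(* ---------- General tournament model ----------
   Players are the elements of 'I_(2^N'); strength is the index order:
   a smaller index means a STRONGER player (index 0 is the strongest).
   A seeding is a permutation s : player -> seed position, positions being
   0-based (position i here = seed i+1 in the paper). *)

Lemma pow2_gt0 (N : nat) : 0 < 2 ^ N.
Proof. by rewrite expn_gt0. Qed.

Definition ord_dflt (N : nat) : 'I_(2 ^ N) := Ordinal (pow2_gt0 N).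

Definition stronger (N : nat) (a b : 'I_(2 ^ N)) : 'I_(2 ^ N) :=
  if val a <= val b then a else b.

Definition player_at (N : nat) (s : {perm 'I_(2 ^ N)}) (i : nat) : 'I_(2 ^ N) :=
  (s^-1)%g (insubd (ord_dflt N) i).

(* winner s r k = winner of the k-th block (0-based) of 2^r consecutive
   seed positions {k 2^r, ..., (k+1) 2^r - 1}. *)
Fixpoint winner (N : nat) (s : {perm 'I_(2 ^ N)}) (r k : nat) : 'I_(2 ^ N) :=
  match r with
  | 0 => player_at s k
  | r'.+1 => stronger (winner s r' k.*2) (winner s r' k.*2.+1)
  end.

Definition tvalue (N : nat) (v : 'I_(2 ^ N) -> 'I_(2 ^ N) -> nat -> nat)
    (s : {perm 'I_(2 ^ N)}) : nat :=
  \sum_(1 <= r < N.+1) \sum_(k < 2 ^ (N - r))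
     v (winner s r.-1 k.*2) (winner s r.-1 k.*2.+1) r.

Lemma ex_pow2_ge (n : nat) : exists e, 16 * n <= 2 ^ e.
Proof. exists (16 * n); exact: ltnW (ltn_expl _ (ltnSn 1)). Qed.

Definition Tn' (n : nat) : nat := ex_minn (ex_pow2_ge n).

(* Player indices (0-based, listed in strength order):
   variable i (0 <= i < n): x_i = 3i, x_i^T = 3i+1, x_i^F = 3i+2;
   clause c (0 <= c < m): 3n + c;
   dummies: all remaining indices 3n+m, ..., 2^n' - 1
   (there are exactly 13n + p - m of them). *)
Definition var_pl (i : nat) : nat := 3 * i.
Definition T_pl (i : nat) : nat := 3 * i + 1.
Definition F_pl (i : nat) : nat := 3 * i + 2.
Definition cl_pl (n c : nat) : nat := 3 * n + c.

(* literal = (variable, polarity); polarity true = non-negated *)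
Definition lit_pl (n : nat) (l : 'I_n * bool) : nat :=
  if l.2 then T_pl l.1 else F_pl l.1.

(* Game values of T_phi. cl c l = l-th literal (l in {0,1}) of clause c,
   occ c l = its appearance number j in {1,2,3} for its variable. *)
Definition Tphi_val (n m : nat) (cl : 'I_m -> 'I_2 -> 'I_n * bool)
    (occ : 'I_m -> 'I_2 -> nat) (a b r : nat) : nat :=
  [&& 1 <= r, r <= Tn' n &
    ((r == 1) &&
      [exists i : 'I_n,
         ((a == var_pl i) && ((b == T_pl i) || (b == F_pl i))) ||
         ((b == var_pl i) && ((a == T_pl i) || (a == F_pl i)))])
    || [exists c : 'I_m, exists l : 'I_2,
         (r == occ c l) &&
         (((a == cl_pl n c) && (b == lit_pl (cl c l))) ||
          ((b == cl_pl n c) && (a == lit_pl (cl c l))))]].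

Definition Tphi_v (n m : nat) (cl : 'I_m -> 'I_2 -> 'I_n * bool)
    (occ : 'I_m -> 'I_2 -> nat) :
    'I_(2 ^ Tn' n) -> 'I_(2 ^ Tn' n) -> nat -> nat :=
  fun a b r => Tphi_val cl occ (val a) (val b) r.

Definition n_occ (n m : nat) (cl : 'I_m -> 'I_2 -> 'I_n * bool) (x : 'I_n) : nat :=
  #|[set p : 'I_m * 'I_2 | (cl p.1 p.2).1 == x]|.

Definition sat_clause (n m : nat) (cl : 'I_m -> 'I_2 -> 'I_n * bool)
    (a : 'I_n -> bool) (c : 'I_m) : bool :=
  [exists l : 'I_2, a (cl c l).1 == (cl c l).2].

From mathcomp Require Import all_boot all_fingroup.
From mathcomp Require Import zify.
Set Implicit Arguments. Unset Strict Implicit. Unset Printing Implicit Defensive.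

(* In a knockout tournament a player plays at most one game per round and
   none after a loss.  A game of positive value is either the round-1
   game of x against x^T or x^F, or a game of a clause player c against the
   player of one of its literals.  Clause players are weaker than all literal
   players, so each plays at most one valued game, and the loser of a variable
   game plays no clause game.  Give each variable the polarity whose literal
   player plays more clause games.  As a variable has at most three
   occurrences, the minority polarity plays at most one clause game, and none
   if the variable game was played.  So each variable accounts for at most one
   game that is a variable game or a game of a falsified literal; every other
   valued game satisfies its clause, and different such games satisfy
   different clauses. *)

Lemma leq_card_rel (A B : finType) (S : {set A}) (T : {set B}) (R : A -> B -> bool) :
    (forall a, a \in S -> exists2 b, b \in T & R a b) ->
    (forall a a' b, a \in S -> a' \in S -> R a b -> R a' b -> a = a') ->
  #|S| <= #|T|.
Proof.
move=> RS R_inj; pose f a := [pick b in T | R a b].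
have f_spec a : a \in S -> exists2 b, f a = Some b & (b \in T) && R a b.
  move=> /RS[b Tb Rab]; rewrite /f; case: pickP => [b' Rab'|/(_ b)]; first by exists b'.
  by rewrite Tb Rab.
rewrite -(card_in_imset (f := f)); last first.
  move=> a a' Sa Sa'; have [b -> /andP[_ Rab]] := f_spec a Sa.
  have [b' -> /andP[_ Rab']] := f_spec a' Sa'.
  by case=> eq_bb'; apply: R_inj Sa Sa' Rab _; rewrite eq_bb'.
rewrite -(card_imset T (@Some_inj _)); apply/subset_leq_card/subsetP => _ /imsetP[a Sa ->].
by have [b -> /andP[Tb _]] := f_spec a Sa; apply: imset_f.
Qed.

Lemma stronger_val (N : nat) (a b : 'I_(2 ^ N)) : val (stronger a b) = minn a b.
Proof. by rewrite /stronger; case: leqP => [/minn_idPl|/ltnW/minn_idPr]. Qed.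

Lemma strongerP (N : nat) (a b : 'I_(2 ^ N)) : stronger a b = a \/ stronger a b = b.
Proof. by rewrite /stronger; case: ifP; [left|right]. Qed.

Lemma double_lt_pow2 (N r k : nat) :
  r < N -> k < 2 ^ (N - r.+1) -> k.*2.+1 < 2 ^ (N - r).
Proof. by move=> lt_rN; rewrite -(subnSK lt_rN) expnS; lia. Qed.

Section Tournament.
Variables (N : nat) (s : {perm 'I_(2 ^ N)}).

Definition block (r : nat) (q : 'I_(2 ^ N)) : nat := val (s q) %/ 2 ^ r.

Lemma block_winner r k : r <= N -> k < 2 ^ (N - r) -> block r (winner s r k) = k.
Proof.
elim: r k => [|r IH] k le_rN lt_k /=.
  by rewrite /block /player_at permKV val_insubd expn0 divn1 -(subn0 N) lt_k.
have lt_k2 := double_lt_pow2 le_rN lt_k.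
rewrite /block expnSr divnMA -/(block r _).
by case: (strongerP (winner s r k.*2) (winner s r k.*2.+1)) => ->; rewrite IH //; lia.
Qed.

Lemma winner_subblock r r' k : r <= r' <= N -> k < 2 ^ (N - r') ->
  winner s r' k = winner s r (block r (winner s r' k)).
Proof.
elim: r' k => [|r' IH] k /andP[le_rr' le_r'N] lt_k.
  by move: le_rr'; rewrite leqn0 => /eqP->; rewrite block_winner.
have [le_rr'1|lt_r'r] := leqP r r'; last first.
  have -> : r = r'.+1 by lia.
  by rewrite block_winner.
have lt_k2 := double_lt_pow2 le_r'N lt_k.
by case: (strongerP (winner s r' k.*2) (winner s r' k.*2.+1)) => /= ->; apply: IH; lia.
Qed.

Definition game := ('I_N.+1 * 'I_(2 ^ N))%type.
Definition is_game (g : game) := (0 < g.1) && (g.2 < 2 ^ (N - g.1)).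
Definition player_a (g : game) := winner s (g.1).-1 (g.2).*2.
Definition player_b (g : game) := winner s (g.1).-1 (g.2).*2.+1.
Definition plays (g : game) (x : nat) := (val (player_a g) == x) || (val (player_b g) == x).

Lemma tvalue_games v :
  tvalue v s = \sum_(g : game | is_game g) v (player_a g) (player_b g) g.1.
Proof.
rewrite -(pair_big_dep (fun r : 'I_N.+1 => 0 < r) (fun r (k : 'I_(2 ^ N)) => k < 2 ^ (N - r))
  (fun r k => v (winner s r.-1 k.*2) (winner s r.-1 k.*2.+1) r)) /tvalue.
rewrite big_add1 big_mkord [RHS]big_mkcond big_ord_recl /= add0n.
apply: eq_bigr => r _; rewrite /bump add1n add0n.
rewrite (big_ord_widen (2 ^ N) (fun k => v (winner s r k.*2) (winner s r k.*2.+1) r.+1)) //.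
by rewrite leq_pexp2l ?leq_subr.
Qed.

Lemma block_plays g q : is_game g -> plays g (val q) -> block g.1 q = g.2.
Proof.
case: g => [[[|r] lt_r] k] //; rewrite /is_game /plays /player_a /player_b /= => lt_k P_q.
have lt_k2 := double_lt_pow2 (lt_r : r < N) lt_k.
rewrite /block expnSr divnMA -/(block r q).
by case/orP: P_q => /eqP/val_inj <-; rewrite block_winner //; lia.
Qed.

Lemma plays_same_round g1 g2 x : is_game g1 -> is_game g2 -> g1.1 = g2.1 :> nat ->
  plays g1 x -> plays g2 x -> g1 = g2.
Proof.
move=> G1 G2 eq_r P1 P2.
have [q eq_qx] : exists q : 'I_(2 ^ N), val q = x by case/orP: P1 => /eqP <-; eexists.
rewrite -eq_qx in P1 P2; have := block_plays G2 P2.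
rewrite -eq_r (block_plays G1 P1).
by case: g1 g2 eq_r {G1 G2 P1 P2} => [r1 k1] [r2 k2] /= /val_inj -> /val_inj ->.
Qed.

Lemma val_winner_game g x y : is_game g -> plays g x -> plays g y -> y < x ->
  val (winner s g.1 g.2) = y.
Proof.
case: g => [[[|r] lt_r] k] //; rewrite /plays /player_a /player_b /= stronger_val => _ Px Py.
by case/orP: Px => /eqP <-; case/orP: Py => /eqP <-; lia.
Qed.

Lemma no_game_after_loss g1 g2 x y : is_game g1 -> is_game g2 -> g1.1 < g2.1 ->
  plays g1 x -> plays g1 y -> y < x -> plays g2 x -> False.
Proof.
move=> G1 G2 lt_r P1x P1y lt_yx P2x.
have lt_wx : val (winner s g1.1 g1.2) < x by rewrite (val_winner_game G1 P1x P1y lt_yx).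
case: g2 G2 lt_r P2x => [[[|r2] lt_r2] k2] //.
rewrite /is_game /plays /player_a /player_b /= => lt_k2 lt_r P2x.
have lt_k2' := double_lt_pow2 (lt_r2 : r2 < N) lt_k2.
have [j lt_j eq_x] : exists2 j, j < 2 ^ (N - r2) & x = val (winner s r2 j).
  by case/orP: P2x => /eqP <-; [exists k2.*2 | exists k2.*2.+1] => //; lia.
rewrite eq_x in P1x lt_wx.
by move: lt_wx; rewrite (@winner_subblock g1.1 r2 j) ?(block_plays G1 P1x) ?ltnn //; lia.
Qed.

Lemma loss_last_game g1 g2 x y : is_game g1 -> is_game g2 -> g1.1 <= g2.1 ->
  plays g1 x -> plays g1 y -> y < x -> plays g2 x -> g1 = g2.
Proof.
move=> G1 G2; rewrite leq_eqVlt => /orP[/eqP eq_r P1x _ _|lt_r P1x P1y lt_yx P2x].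
  exact: plays_same_round.
by case: (no_game_after_loss G1 G2 lt_r P1x P1y lt_yx P2x).
Qed.

Lemma plays_at_most_two g x y z : plays g x -> plays g y -> plays g z -> x < y < z -> False.
Proof. by move=> /orP[]/eqP<- /orP[]/eqP<- /orP[]/eqP<-; lia. Qed.

End Tournament.

Section Construction.
Variables (n m : nat) (cl : 'I_m -> 'I_2 -> 'I_n * bool) (occ : 'I_m -> 'I_2 -> nat).
Variable s : {perm 'I_(2 ^ Tn' n)}.
Local Notation game := (game (Tn' n)).
Local Notation plays := (plays s).

Definition valued_games : {set game} :=
  [set g | is_game g && (0 < Tphi_val cl occ (player_a s g) (player_b s g) g.1)].

Lemma tvalue_valued_games : tvalue (Tphi_v cl occ) s = #|valued_games|.
Proof.
rewrite tvalue_games -sum1_card [RHS]big_mkcond [LHS]big_mkcond /=.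
by apply: eq_bigr => g _; rewrite inE /Tphi_v /Tphi_val; case: is_game; case: [&& _, _ & _].
Qed.

Definition var_game (i : 'I_n) (g : game) : bool :=
  (g.1 == 1 :> nat) && plays g (var_pl i) && [exists b, plays g (lit_pl (i, b))].

Definition occ_game (p : 'I_m * 'I_2) (g : game) : bool :=
  plays g (cl_pl n p.1) && plays g (lit_pl (cl p.1 p.2)).

Lemma valued_gameP g : g \in valued_games ->
  is_game g /\ ((exists i, var_game i g) \/ (exists p, occ_game p g)).
Proof.
rewrite inE /Tphi_val lt0b => /andP[G /and3P[_ _ /orP[/andP[r1 /existsP[i Pi]]|]]];
  last case/existsP=> c /existsP[l /andP[_ Pcl]]; split => //.
  have Pv : plays g (var_pl i) by case/orP: Pi => /andP[Pv _]; rewrite /plays Pv ?orbT.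
  have Pl : [exists b, plays g (lit_pl (i, b))].
    by case/orP: Pi => /andP[_ /orP[] Pl]; apply/existsP;
      [exists true | exists false | exists true | exists false]; rewrite /plays Pl ?orbT.
  by left; exists i; rewrite /var_game r1 Pv Pl.
right; exists (c, l).
by rewrite /occ_game /plays /=; case/orP: Pcl => /andP[-> ->]; rewrite ?orbT.
Qed.

Lemma lit_pl_lt_cl_pl (l : 'I_n * bool) (c : 'I_m) : lit_pl l < cl_pl n c.
Proof. by case: l => [i []]; rewrite /lit_pl /T_pl /F_pl /cl_pl /=; have := ltn_ord i; lia. Qed.

Lemma var_pl_lt_lit_pl (i : 'I_n) (b : bool) : var_pl i < lit_pl (i, b).
Proof. by case: b; rewrite /lit_pl /var_pl /T_pl /F_pl /=; lia. Qed.

Lemma occ_game_unique g1 g2 p1 p2 : is_game g1 -> is_game g2 ->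
  occ_game p1 g1 -> occ_game p2 g2 -> p1.1 = p2.1 -> g1 = g2.
Proof.
wlog le_r : g1 g2 p1 p2 / g1.1 <= g2.1.
  move=> hwlog G1 G2 O1 O2 eq_c; have [le|/ltnW le] := leqP g1.1 g2.1.
    exact: hwlog le G1 G2 O1 O2 eq_c.
  exact/esym/(hwlog g2 g1 p2 p1 le G2 G1 O2 O1 (esym eq_c)).
move=> G1 G2 /andP[C1 L1] /andP[C2 _] eq_c; rewrite eq_c in C1.
exact: loss_last_game G1 G2 le_r C1 L1 (lit_pl_lt_cl_pl _ _) C2.
Qed.

Lemma var_game_unique g1 g2 i : is_game g1 -> is_game g2 ->
  var_game i g1 -> var_game i g2 -> g1 = g2.
Proof.
move=> G1 G2 /andP[/andP[/eqP r1 V1] _] /andP[/andP[/eqP r2 V2] _].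
by apply: plays_same_round G1 G2 _ V1 V2; rewrite r1 r2.
Qed.

Definition lit_games (l : 'I_n * bool) : {set game} :=
  [set g in valued_games | [exists p, occ_game p g && (cl p.1 p.2 == l)]].

Lemma lit_games_beaten g i b : is_game g -> var_game i g ->
  plays g (lit_pl (i, b)) -> lit_games (i, b) = set0.
Proof.
move=> G /andP[/andP[/eqP r1 V] _] L; apply/setP => g'; rewrite in_set0 inE.
apply/negbTE/negP => /andP[/valued_gameP[G' _] /existsP[p /andP[/andP[C' L'] /eqP cl_p]]].
rewrite cl_p in L'.
have le_r : g.1 <= g'.1 by rewrite r1; case/andP: G'.
move: C'; rewrite -(loss_last_game G G' le_r L V (var_pl_lt_lit_pl i b) L') => C.
by apply: (plays_at_most_two V L C); rewrite var_pl_lt_lit_pl lit_pl_lt_cl_pl.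
Qed.

Lemma lit_games_disjoint i : lit_games (i, true) :&: lit_games (i, false) = set0.
Proof.
apply/setP => g; rewrite !inE; apply/negbTE/negP.
case/andP=> /andP[_ /existsP[p /andP[/andP[C LT] /eqP clp]]].
case/andP=> _ /existsP[q /andP[/andP[_ LF] /eqP clq]].
rewrite clp in LT; rewrite clq in LF.
apply: (plays_at_most_two LT LF C).
by rewrite (lit_pl_lt_cl_pl (i, false)) /lit_pl /T_pl /F_pl /= andbT; lia.
Qed.

Hypothesis n_occ_le3 : forall x : 'I_n, n_occ cl x <= 3.

Lemma card_lit_games i : #|lit_games (i, true)| + #|lit_games (i, false)| <= 3.
Proof.
rewrite -cardsUI lit_games_disjoint cards0 addn0; apply: leq_trans (n_occ_le3 i).
apply: (@leq_card_rel _ _ _ _ (fun g p => occ_game p g)).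
  move=> g; rewrite !inE => /orP[] /andP[_ /existsP[p /andP[O /eqP clp]]];
    by exists p; rewrite // inE clp.
move=> g g' p; rewrite !inE => /orP[] /andP[/andP[G _] _] /orP[] /andP[/andP[G' _] _] O O';
  exact: occ_game_unique G G' O O' erefl.
Qed.

Definition majority (i : 'I_n) : bool := #|lit_games (i, false)| <= #|lit_games (i, true)|.

Lemma card_minority_lit_games i :
  #|lit_games (i, ~~ majority i)| <= #|lit_games (i, majority i)|.
Proof. by rewrite /majority; case: (leqP #|lit_games (i, false)|) => [|/ltnW]. Qed.

Lemma card_minority_lit_games_le1 i : #|lit_games (i, ~~ majority i)| <= 1.
Proof.
by have := card_minority_lit_games i; have := card_lit_games i; case: (majority i) => /=; lia.
Qed.

Lemma var_game_minority g i : is_game g -> var_game i g -> lit_games (i, ~~ majority i) = set0.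
Proof.
move=> G V; case/andP: (V) => _ /existsP[b L].
have beaten := lit_games_beaten G V L.
have [eq_b|ne_b] := eqVneq b (~~ majority i); first by rewrite -eq_b.
have eq_b : b = majority i by case: (majority i) ne_b; case: (b).
apply: cards0_eq; apply/eqP; rewrite -leqn0.
by have := card_minority_lit_games i; rewrite -eq_b beaten cards0.
Qed.

Definition var_charge (g : game) (i : 'I_n) : bool :=
  var_game i g || (g \in lit_games (i, ~~ majority i)).

Definition clause_charge (g : game) (c : 'I_m) : bool :=
  [exists l, occ_game (c, l) g && (majority (cl c l).1 == (cl c l).2)].

Lemma var_charge_unique g1 g2 i : is_game g1 -> is_game g2 ->
  var_charge g1 i -> var_charge g2 i -> g1 = g2.
Proof.
move=> G1 G2 /orP[V1|M1] /orP[V2|M2].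
- exact: var_game_unique G1 G2 V1 V2.
- by rewrite (var_game_minority G1 V1) inE in M2.
- by rewrite (var_game_minority G2 V2) inE in M1.
- exact/esym/(card_le1_eqP (card_minority_lit_games_le1 i)).
Qed.

Lemma clause_charge_unique g1 g2 c : is_game g1 -> is_game g2 ->
  clause_charge g1 c -> clause_charge g2 c -> g1 = g2.
Proof.
move=> G1 G2 /existsP[l1 /andP[O1 _]] /existsP[l2 /andP[O2 _]].
exact: occ_game_unique G1 G2 O1 O2 erefl.
Qed.

Lemma valued_game_charged g : g \in valued_games ->
  [exists i, var_charge g i] || [exists c, clause_charge g c].
Proof.
move=> Vg; have [_ [[i Vi]|[[c l] O]]] := valued_gameP Vg.
  by apply/orP; left; apply/existsP; exists i; rewrite /var_charge Vi.
have [sat|unsat] := eqVneq (majority (cl c l).1) (cl c l).2.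
  by apply/orP; right; apply/existsP; exists c; apply/existsP; exists l; rewrite O sat eqxx.
apply/orP; left; apply/existsP; exists (cl c l).1; apply/orP; right.
move: Vg; rewrite !inE => -> /=; apply/existsP; exists (c, l); rewrite O /=.
by case: (cl c l) unsat => x b /=; case: b; case: (majority x).
Qed.

Lemma card_valued_games : #|valued_games| <= n + #|[set c | sat_clause cl majority c]|.
Proof.
pose V := [set g in valued_games | [exists i, var_charge g i]].
pose C := [set g in valued_games | [exists c, clause_charge g c]].
have sub_VC : valued_games \subset V :|: C.
  apply/subsetP => g Vg; have := valued_game_charged Vg; move: Vg.
  by rewrite !inE => ->.
apply: leq_trans (subset_leq_card sub_VC) _.
apply: leq_trans (leq_of_leqif (leq_card_setU V C)) _; apply: leq_add.
  rewrite -[X in _ <= X](card_ord n) -cardsT; apply: (@leq_card_rel _ _ _ _ var_charge).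
    by move=> g; rewrite inE => /andP[_ /existsP[i Ci]]; exists i; rewrite ?inE.
  move=> g g' i; rewrite !inE => /andP[/andP[G _] _] /andP[/andP[G' _] _].
  exact: var_charge_unique.
apply: (@leq_card_rel _ _ _ _ clause_charge).
  move=> g; rewrite inE => /andP[_ /existsP[c Cc]]; exists c => //.
  by case/existsP: Cc => l /andP[_ sat]; rewrite inE; apply/existsP; exists l.
move=> g g' c; rewrite !inE => /andP[/andP[G _] _] /andP[/andP[G' _] _].
exact: clause_charge_unique.
Qed.

End Construction.

Unset Implicit Arguments.

Theorem lemma2 (n m : nat) (cl : 'I_m -> 'I_2 -> 'I_n * bool)
    (occ : 'I_m -> 'I_2 -> nat)
    (Hthree : forall x : 'I_n, n_occ cl x <= 3)
    (Hocc_range : forall (c : 'I_m) (l : 'I_2),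
        1 <= occ c l <= n_occ cl (cl c l).1)
    (Hocc_inj : forall (c c' : 'I_m) (l l' : 'I_2),
        (cl c l).1 = (cl c' l').1 -> occ c l = occ c' l' -> (c, l) = (c', l'))
    (k' : nat) :
  (exists s : {perm 'I_(2 ^ Tn' n)}, k' <= tvalue (Tphi_v cl occ) s) ->
  exists a : 'I_n -> bool,
    k' - n <= #|[set c : 'I_m | sat_clause cl a c]|.
Proof.
move=> [s le_k'_value]; exists (majority cl occ s).
rewrite leq_subLR; apply: leq_trans le_k'_value _.
by rewrite tvalue_valued_games; exact: card_valued_games.
Qed.
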